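(* Let $G=(V,E)$ be a finite, undirected, connected, unweighted graph, let $R\subseteq V$ be a set of landmarks, and let $\mathcal{L}=(M,L)$ be the labelling scheme of $G$ with respect to $R$ (defined in the context). For any two vertices $u,v\in V$, define $$d^{\top}_{uv}=\min\{\delta_{ur}+d_M(r,r')+\delta_{r'v} \mid (r,\delta_{ur})\in L(u),\ (r',\delta_{r'v})\in L(v)\},$$ with the convention $\min\emptyset=+\infty$. Then $d^{\top}_{uv}\geq d_G(u,v)$.
   Context: $d_G(x,y)$ denotes the shortest-path distance (number of edges) between $x$ and $y$ in $G$, and $P_{xy}$ denotes the set of all shortest paths between $x$ and $y$ in $G$; $V(p)$ is the vertex set of a path $p$. The meta-graph is $M=(R,E_R,\sigma)$, the edge-weighted graph on vertex set $R$ in which, for distinct $r,r'\in R$, $\{r,r'\}\in E_R$ iff at least one shortest path in $G$ between $r$ and $r'$ contains no vertex of $R$ other than $r$ and $r'$, and such an edge has weight $\sigma(r,r')=d_G(r,r')$. $d_M(r,r')$ denotes the weighted shortest-path distance between $r$ and $r'$ in $M$ (with $d_M(r,r)=0$ and $d_M(r,r')=+\infty$ if no path exists). The path labelling $L$ assigns to each $u\in V\setminus R$ the label $L(u)=\{(r,\delta_{ur}) \mid r\in R,\ \delta_{ur}=d_G(u,r),\ \exists p\in P_{ur}\text{ with } V(p)\cap R=\{r\}\}$, and to each landmark $u\in R$ the empty label $L(u)=\emptyset$. The pair $\mathcal{L}=(M,L)$ is the labelling scheme. *)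

From mathcomp Require Import all_boot.
From Stdlib Require Import ClassicalEpsilon.
Set Implicit Arguments. Unset Strict Implicit. Unset Printing Implicit Defensive.

(* Extended naturals N ∪ {+oo}: [None] is +oo. *)
Definition ole (a b : option nat) : Prop :=
  match a, b with
  | _, None => True
  | None, Some _ => False
  | Some x, Some y => x <= y
  end.

Definition is_least (P : nat -> Prop) (n : nat) : Prop :=
  P n /\ forall m, P m -> n <= m.

Definition natmin (P : nat -> Prop) : option nat :=
  match excluded_middle_informative (exists n, is_least P n) with
  | left H => Some (proj1_sig (constructive_indefinite_description _ H))
  | right _ => None
  end.

Section Labelling.
Variables (T : finType) (e : rel T) (R : {set T}).

(* A walk from x to y: the sequence p of vertices after x; its vertex set is x :: p,
   its length (number of edges) is size p. *)
Definition walk (x y : T) (p : seq T) : Prop := path e x p /\ last x p = y.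

Definition dG (x y : T) : option nat :=
  natmin (fun n => exists p, walk x y p /\ size p = n).

Definition shortest_path (x y : T) (p : seq T) : Prop :=
  walk x y p /\ dG x y = Some (size p).

(* Edge {r,r'} of the meta-graph M. *)
Definition medge (r r' : T) : Prop :=
  [/\ r \in R, r' \in R, r != r' &
   exists p, shortest_path r r' p /\
     forall w, w \in r :: p -> w \in R -> w = r \/ w = r'].

(* mwalk x y s w : s is a walk in M from x to y (vertices after x) of total
   weight w, each edge {a,b} weighing sigma(a,b) = d_G(a,b). *)
Fixpoint mwalk (x y : T) (s : seq T) (w : nat) : Prop :=
  match s with
  | [::] => x = y /\ w = 0
  | z :: s' => medge x z /\
      exists w1 w2, dG x z = Some w1 /\ mwalk z y s' w2 /\ w = w1 + w2
  end.

Definition dM (r r' : T) : option nat :=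
  natmin (fun w => exists s, mwalk r r' s w).

(* (r, delta) ∈ L(u). Landmarks get the empty label. *)
Definition inL (u r : T) (delta : nat) : Prop :=
  [/\ u \notin R, r \in R, dG u r = Some delta &
   exists p, shortest_path u r p /\ forall w, w \in u :: p -> w \in R -> w = r].

Definition dtop (u v : T) : option nat :=
  natmin (fun n => exists r du r' dv dm,
    [/\ inL u r du, inL v r' dv, dM r r' = Some dm & n = du + dm + dv]).

End Labelling.

(** Every term of the minimum defining [d^top_uv] is the length of an actual
    walk from [u] to [v]: a shortest path from [u] to [r], then the
    concatenation of the shortest paths realising the edges of a meta-walk
    from [r] to [r'], then a shortest path from [r'] to [v] traversed
    backwards.  Hence [d_G(u,v)] is at most each such term. *)
From mathcomp Require Import all_boot.
From Stdlib Require Import Classical ClassicalEpsilon Wf_nat.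
Set Implicit Arguments. Unset Strict Implicit.

Lemma natminP (P : nat -> Prop) d : natmin P = Some d -> is_least P d.
Proof.
rewrite /natmin; case: excluded_middle_informative => // H [<-].
exact: proj2_sig (constructive_indefinite_description _ H).
Qed.

Lemma exists_least (P : nat -> Prop) n : P n -> exists m, is_least P m.
Proof.
move=> Pn.
have [m [[Pm m_least] _]] :=
  @dec_inh_nat_subset_has_unique_least_element P (fun k => classic (P k)) (ex_intro _ n Pn).
by exists m; split=> // k /m_least /leP.
Qed.

Lemma natmin_ole (P : nat -> Prop) n : P n -> ole (natmin P) (Some n).
Proof.
move=> Pn; rewrite /natmin; case: excluded_middle_informative => [H|[]] /=.
  by case: (proj2_sig (constructive_indefinite_description _ H)) => _; apply.
exact: exists_least Pn.
Qed.

Section Walks.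
Variables (T : finType) (e : rel T) (R : {set T}).

Lemma dG_ole_walk x y p : walk e x y p -> ole (dG e x y) (Some (size p)).
Proof. by move=> Wp; apply: natmin_ole; exists p. Qed.

Lemma shortest_path_size x y p d :
  shortest_path e x y p -> dG e x y = Some d -> walk e x y p /\ size p = d.
Proof. by move=> [Wp ->] [<-]. Qed.

Lemma walk_cat x y z p q : walk e x y p -> walk e y z q -> walk e x z (p ++ q).
Proof. by move=> [Pp Lp] [Pq Lq]; split; rewrite ?cat_path ?last_cat Lp ?Pp. Qed.

Lemma walk_rev x y p : symmetric e -> walk e x y p -> walk e y x (rev (belast x p)).
Proof.
move=> e_sym [Pp <-]; split.
  by rewrite rev_path (eq_path (e' := e)) // => a b; rewrite e_sym.
by case/lastP: p {Pp} => [|q w] //=; rewrite belast_rcons rev_cons last_rcons.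
Qed.

Lemma mwalk_walk s x y w : mwalk e R x y s w -> exists p, walk e x y p /\ size p = w.
Proof.
elim: s x w => [|z s IH] x w /=.
  by move=> [-> ->]; exists [::].
move=> [[_ _ _ [p [SPp _]]] [w1 [w2 [Dxz [Ms ->]]]]].
have [Wp <-] := shortest_path_size SPp Dxz.
have [q [Wq <-]] := IH _ _ Ms.
by exists (p ++ q); rewrite size_cat; split=> //; apply: walk_cat Wp Wq.
Qed.

End Walks.

Theorem mainTheorem1 (T : finType) (e : rel T) (R : {set T})
  (e_sym : symmetric e) (e_irr : irreflexive e)
  (e_conn : forall x y : T, connect e x y)
  (u v : T) :
  ole (dG e u v) (dtop e R u v).
Proof.
case Ht: (dtop e R u v) => [n|]; last by case: (dG e u v).
have [[r [du [r' [dv [dm [Lu Lv DM ->]]]]]] _] := natminP Ht.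
have [_ _ Dur [p1 [SP1 _]]] := Lu.
have [_ _ Dvr' [p2 [SP2 _]]] := Lv.
have [W1 <-] := shortest_path_size SP1 Dur.
have [W2 <-] := shortest_path_size SP2 Dvr'.
have [[s Ms] _] := natminP DM.
have [q [Wq <-]] := mwalk_walk Ms.
have := dG_ole_walk (walk_cat (walk_cat W1 Wq) (walk_rev e_sym W2)).
by rewrite !size_cat size_rev size_belast.
Qed.
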